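(* Consider the resilient constrained consensus algorithm described in the context with exactly $f$ Byzantine agents, i.e. $|\mathcal F| = f$, and a fixed step size $\alpha>0$. Suppose that for every choice of initial states $x_i(0)\in\mathcal X_i$ ($i\in\mathcal H$), every behaviour of the Byzantine agents and every tie-breaking in the filtering step, all normal agents reach a consensus at some point of $\mathcal X=\bigcap_{i\in\mathcal H}\mathcal X_i$, meaning there exists $z\in\mathcal X$ with $x_i(t)\to z$ as $t\to\infty$ for all $i\in\mathcal H$. Then the set of normal agents $\mathcal H$ is $2f$-redundant.
   Context: Setting: There are $n$ agents $\mathcal N=\{1,\dots,n\}$, and every agent can communicate with every other agent (complete graph). An integer $f\ge 0$ is known to all agents. The agents are partitioned into normal agents $\mathcal H$ and Byzantine agents $\mathcal F$ with $|\mathcal F|\le f$, so $|\mathcal H|\ge n-f$. Which agents are Byzantine is unknown to the normal agents. Each normal agent $i\in\mathcal H$ has a nonempty closed convex set $\mathcal X_i\subseteq\mathbb R^m$, and $\mathcal X=\bigcap_{i\in\mathcal H}\mathcal X_i$ is nonempty. Each normal agent's state is constrained to lie in $\mathcal X_i$; in particular $x_i(0)\in\mathcal X_i$. Algorithm (discrete time $t=0,1,2,\dots$): each normal agent $i$ has a state $x_i(t)\in\mathbb R^m$. At time $t$, agent $i$ receives a vector $x_{ji}(t)$ from each $j\in\mathcal N\setminus\{i\}$. If $j\in\mathcal H$, then $x_{ji}(t)=x_j(t)$. If $j\in\mathcal F$, then $x_{ji}(t)$ is arbitrary and may differ for different recipients. Agent $i$ discards the $f$ received vectors with the largest Euclidean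 distance $\|x_i(t)-x_{ji}(t)\|$, with ties broken arbitrarily. Let $\mathcal M_i(t)\subseteq\mathcal N\setminus\{i\}$ be the set of the remaining $n-f-1$ senders. The update is $$x_i(t+1)=\mathrm P_{\mathcal X_i}\Big[x_i(t)+\alpha\sum_{j\in\mathcal M_i(t)}(x_{ji}(t)-x_i(t))\Big],$$ where $\alpha>0$ and $\mathrm P_{\mathcal C}[x]=\arg\min_{y\in\mathcal C}\|x-y\|$ is the Euclidean projection. Definition: $\mathcal H$ is $k$-redundant if for every $\mathcal S\subseteq\mathcal H$ with $|\mathcal S|\ge n-k$ we have $\bigcap_{i\in\mathcal S}\mathcal X_i=\bigcap_{i\in\mathcal H}\mathcal X_i$. *)

From HB Require Import structures.
From mathcomp Require Import all_boot all_order all_algebra.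
From mathcomp Require Import reals.
Set Implicit Arguments. Unset Strict Implicit. Unset Printing Implicit Defensive.
Import Order.TTheory GRing.Theory Num.Theory.
Local Open Scope ring_scope.

Section Defs.
Variables (R : realType) (m : nat).

Definition enorm (v : 'rV[R]_m) : R := Num.sqrt (\sum_(k < m) (v 0 k) ^+ 2).

Definition eclosed (C : 'rV[R]_m -> Prop) : Prop :=
  forall x, (forall e : R, 0 < e -> exists2 y, C y & enorm (x - y) < e) -> C x.

Definition convex (C : 'rV[R]_m -> Prop) : Prop :=
  forall x y (t : R), C x -> C y -> 0 <= t -> t <= 1 -> C (t *: x + (1 - t) *: y).

Definition is_proj (C : 'rV[R]_m -> Prop) (x y : 'rV[R]_m) : Prop :=
  C y /\ forall z, C z -> enorm (x - y) <= enorm (x - z).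

Definition converges_to (u : nat -> 'rV[R]_m) (z : 'rV[R]_m) : Prop :=
  forall e : R, 0 < e -> exists T : nat, forall t, (T <= t)%N -> enorm (u t - z) < e.
End Defs.

Section Algo.
Variables (R : realType) (n m f : nat).

(* [valid_run H X alpha x msg M]: x t i is the state of agent i at time t,
   msg t j i is the vector x_{ji}(t) that agent i receives from j at time t,
   M t i is the set M_i(t) of senders kept after filtering.
   Only the states of normal agents (i \in H) are meaningful. *)
Definition valid_run (H : {set 'I_n}) (X : 'I_n -> 'rV[R]_m -> Prop) (alpha : R)
    (x : nat -> 'I_n -> 'rV[R]_m) (msg : nat -> 'I_n -> 'I_n -> 'rV[R]_m)
    (M : nat -> 'I_n -> {set 'I_n}) : Prop :=
  (forall i, i \in H -> X i (x 0%N i)) /\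
  (* normal senders transmit their true state; Byzantine messages are arbitrary *)
  (forall t i j, j \in H -> msg t j i = x t j) /\
  (* filtering: keep n-f-1 senders other than i, discarding the f farthest
     (ties broken arbitrarily) *)
  (forall t i, i \in H ->
     [/\ M t i \subset ~: [set i],
         #|M t i| = (n - f - 1)%N &
         forall j k, j \in M t i -> k != i -> k \notin M t i ->
           enorm (x t i - msg t j i) <= enorm (x t i - msg t k i)]) /\
  (forall t i, i \in H ->
     is_proj (X i) (x t i + alpha *: \sum_(j in M t i) (msg t j i - x t i))
             (x t.+1 i)).

Definition k_redundant (H : {set 'I_n}) (X : 'I_n -> 'rV[R]_m -> Prop) (k : nat) : Prop :=
  forall S : {set 'I_n}, S \subset H -> (n - k <= #|S|)%N ->
    forall v, (forall i, i \in S -> X i v) <-> (forall i, i \in H -> X i v).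
End Algo.

(* If the normal agents of a set S with |S| = n - 2f all start at a common
   point v of their constraint sets, the Byzantine agents can freeze them at v:
   every agent of S keeps the other agents of S and the f Byzantine agents, all
   of which report v, and discards the f normal agents outside S.  To a normal
   agent outside S the Byzantine agents report the state of its farthest normal
   neighbour, so it may keep exactly the normal agents.  The run then converges
   to v, which must therefore lie in every X_i.  Running the algorithm needs the
   Euclidean projection onto a nonempty closed convex set; it is obtained as the
   limit of a minimizing sequence, which is Cauchy by the parallelogram law. *)

From HB Require Import structures.
From mathcomp Require Import all_boot all_order all_algebra.
From mathcomp Require Import reals.
From mathcomp Require Import boolp topology normedtype sequences.
From mathcomp Require Import ring lra zify.
Import Order.TTheory GRing.Theory Num.Theory.
Import numFieldNormedType.Exports.
Local Open Scope ring_scope.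
Local Open Scope classical_set_scope.

Section EuclideanProjection.
Context {R : realType} {m : nat}.
Implicit Types (a b x y : 'rV[R]_m) (C : 'rV[R]_m -> Prop).

Definition sqnorm a : R := \sum_(k < m) (a 0 k) ^+ 2.

Lemma sqnorm_ge0 a : 0 <= sqnorm a.
Proof. by apply: sumr_ge0 => k _; exact: sqr_ge0. Qed.

Lemma sqnorm_coord a k : (a 0 k) ^+ 2 <= sqnorm a.
Proof.
by rewrite /sqnorm (bigD1 k) //= lerDl; apply: sumr_ge0 => j _; exact: sqr_ge0.
Qed.

Lemma sqnorm_distC a b : sqnorm (a - b) = sqnorm (b - a).
Proof. by apply: eq_bigr => k _; rewrite !mxE -sqrrN opprB. Qed.

Lemma sqnorm_parallelogram x a b :
  sqnorm (a - b) + 4 * sqnorm (x - (2^-1 *: a + (1 - 2^-1) *: b)) =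
  2 * sqnorm (x - a) + 2 * sqnorm (x - b).
Proof.
rewrite /sqnorm !mulr_sumr -!big_split /=; apply: eq_bigr => k _; rewrite !mxE.
by field.
Qed.

Lemma enorm_ge0 a : 0 <= enorm a.
Proof. exact: sqrtr_ge0. Qed.

Lemma ler_enorm a b : (enorm a <= enorm b) = (sqnorm a <= sqnorm b).
Proof. by rewrite /enorm ler_sqrt // sqnorm_ge0. Qed.

Lemma enorm_lt a (e : R) : 0 < e -> sqnorm a < e ^+ 2 -> enorm a < e.
Proof.
move=> e0 lt_a_e; rewrite /enorm -(ger0_norm (ltW e0)) -sqrtr_sqr ltr_sqrt //.
by rewrite exprn_gt0.
Qed.

Lemma enorm0 : enorm (0 : 'rV[R]_m) = 0.
Proof. by rewrite /enorm big1 ?sqrtr0 // => k _; rewrite mxE expr0n. Qed.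

Lemma enorm_eq0 a : (enorm a == 0) = (a == 0).
Proof.
apply/idP/eqP => [|->]; last by rewrite enorm0.
rewrite sqrtr_eq0 => a_le0; apply/rowP => k; rewrite mxE; apply/eqP.
by rewrite -sqrf_eq0 eq_le sqr_ge0 (le_trans (sqnorm_coord a k)).
Qed.

Lemma sqnorm_cvg {a : nat -> 'rV[R]_m} {A : 'rV[R]_m} :
  (forall k, (fun l => a l 0 k) @ \oo --> A 0 k) ->
  forall b, (fun l => sqnorm (b - a l)) @ \oo --> sqnorm (b - A).
Proof.
move=> a_cvg b; apply: cvg_big => //; first exact: add_continuous.
move=> k _; under eq_fun do rewrite !mxE expr2.
by rewrite !mxE expr2; apply: cvgM; apply: cvgB => //; exact: cvg_cst.
Qed.

Lemma cvg0_eventually_lt {h : nat -> R} :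
  h @ \oo --> 0 -> forall e, 0 < e -> exists K, forall k, (K <= k)%N -> h k < e.
Proof. by move=> h0 e e0; have [K _ hK] := cvgr_lt _ h0 _ e0; exists K. Qed.

Lemma cauchy_row_cvg {a : nat -> 'rV[R]_m} {h : nat -> R} :
  h @ \oo --> 0 -> (forall k l, (k <= l)%N -> sqnorm (a k - a l) <= h k) ->
  exists2 A : 'rV[R]_m, forall c, (fun l => a l 0 c) @ \oo --> A 0 c
                     & forall k, sqnorm (a k - A) <= h k.
Proof.
move=> h0 a_cauchy.
have coord_cvg k : cvg ((fun l => a l 0 k) @ \oo).
  apply/cauchy_cvgP/cauchy_exP => e e0.
  have [K hK] := cvg0_eventually_lt h0 _ (exprn_gt0 2 e0).
  exists (a K 0 k), K => // l /= Kl; rewrite -ball_normE /ball_ /=.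
  rewrite -[e](ger0_norm (ltW e0)) -!sqrtr_sqr ltr_sqrt ?exprn_gt0 //.
  apply: le_lt_trans (hK K (leqnn K)); apply: le_trans (a_cauchy _ _ Kl).
  by have := sqnorm_coord (a K - a l) k; rewrite !mxE.
pose A := \row_k lim ((fun l => a l 0 k) @ \oo).
have A_cvg k : (fun l => a l 0 k) @ \oo --> A 0 k by rewrite mxE; exact: coord_cvg.
exists A => // k; apply: (ler_cvg_to (sqnorm_cvg A_cvg (a k)) (cvg_cst (h k))).
by exists k => // l /=; exact: a_cauchy.
Qed.

Lemma convex_sqnorm_gap {C x} {d : R} {a b} :
  convex C -> (forall y, C y -> d <= sqnorm (x - y)) -> C a -> C b ->
  sqnorm (a - b) <= 2 * (sqnorm (x - a) - d) + 2 * (sqnorm (x - b) - d).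
Proof.
move=> C_convex d_lb Ca Cb.
have /d_lb mid_ge : C (2^-1 *: a + (1 - 2^-1) *: b).
  by apply: C_convex; rewrite ?invr_ge0 ?ler0n ?invf_le1 ?ler1n.
by have := sqnorm_parallelogram x a b; lra.
Qed.

Lemma proj_exists {C} :
  (exists y, C y) -> eclosed C -> convex C -> forall x, exists y, is_proj C x y.
Proof.
move=> [y0 Cy0] C_closed C_convex x.
pose E r := exists2 y, C y & sqnorm (x - y) = r.
have E_inf : classical_sets.has_inf E.
  split; first by exists (sqnorm (x - y0)), y0.
  by exists 0 => _ [y _ <-]; exact: sqnorm_ge0.
pose d := inf E.
have d_lb y : C y -> d <= sqnorm (x - y) by move=> Cy; apply: (ge_inf E_inf.2); exists y.
have /choice[a a_min] k : exists y, C y /\ sqnorm (x - y) < d + harmonic k.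
  have [_ [y Cy <-] lt_y] := inf_adherent (harmonic_gt0 k) E_inf.
  by exists y.
pose h k := 4 * @harmonic R k.
have h0 : h @ \oo --> 0.
  by rewrite /h -(mulr0 4); apply: cvgM; [exact: cvg_cst | exact: cvg_harmonic].
have a_cauchy k l : (k <= l)%N -> sqnorm (a k - a l) <= h k.
  move=> le_kl; have [Cak ak_lt] := a_min k; have [Cal al_lt] := a_min l.
  have := convex_sqnorm_gap C_convex d_lb Cak Cal.
  have : harmonic l <= harmonic k :> R by rewrite lef_pV2 ?posrE ?ltr0n // ler_nat.
  rewrite /h; lra.
have [w a_cvg a_w] := cauchy_row_cvg h0 a_cauchy.
exists w; split=> [|z Cz].
  apply: C_closed => e e0; have [K hK] := cvg0_eventually_lt h0 _ (exprn_gt0 2 e0).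
  exists (a K); first by case: (a_min K).
  by apply: enorm_lt => //; rewrite sqnorm_distC; apply: le_lt_trans (hK K _).
rewrite ler_enorm; apply: le_trans (d_lb z Cz).
have dh : (fun l => d + harmonic l) @ \oo --> d + 0.
  by apply: cvgD; [exact: cvg_cst | exact: cvg_harmonic].
rewrite -[d]addr0; apply: (ler_cvg_to (sqnorm_cvg a_cvg x) dh).
by apply: nearW => l /=; have [_ /ltW] := a_min l.
Qed.

Lemma is_proj_id {C x y} : is_proj C x y -> C x -> y = x.
Proof.
move=> [_ y_min] Cx; have := y_min x Cx; rewrite subrr enorm0 => le0.
by apply/eqP; rewrite eq_sym -subr_eq0 -enorm_eq0 eq_le le0 enorm_ge0.
Qed.

Lemma converges_to_cst {u : nat -> 'rV[R]_m} {v z} :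
  (forall t, u t = v) -> converges_to u z -> z = v.
Proof.
move=> u_v u_z; apply/eqP; rewrite eq_sym -subr_eq0 -enorm_eq0 eq_le enorm_ge0 andbT.
rewrite leNgt; apply/negP => /u_z[T /(_ T (leqnn T))].
by rewrite u_v ltxx.
Qed.

End EuclideanProjection.

Lemma exists_subset_card {T : finType} {A : {set T}} {k} :
  (k <= #|A|)%N -> exists2 B : {set T}, B \subset A & #|B| = k.
Proof.
move=> /card_geqP[s [s_uniq s_size sA]]; exists [set x in s].
  by apply/subsetP => x; rewrite inE; exact: sA.
by rewrite cardsE (card_uniqP s_uniq).
Qed.

Section ByzantineAttack.
Context {R : realType} {n m f : nat} {H S : {set 'I_n}} {X : 'I_n -> 'rV[R]_m -> Prop}.
Variable alpha : R.
Context {P : 'I_n -> 'rV[R]_m -> 'rV[R]_m} {v : 'rV[R]_m}.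
Hypotheses (SH : {subset S <= H}) (card_S : #|S| = (n - 2 * f)%N) (card_F : #|~: H| = f).
Hypotheses (P_proj : forall i y, i \in H -> is_proj (X i) y (P i y)).
Hypothesis (X_v : forall i, i \in S -> X i v).

Definition farthest (x : 'I_n -> 'rV[R]_m) (i : 'I_n) : 'I_n :=
  [arg max_(j > i in H) enorm (x i - x j)]%O.

Definition attack_msg (x : 'I_n -> 'rV[R]_m) (j i : 'I_n) : 'rV[R]_m :=
  if j \in H then x j else if i \in S then v else x (farthest x i).

Definition attack_kept (i : 'I_n) : {set 'I_n} :=
  if i \in S then (S :\ i) :|: ~: H else H :\ i.

Definition attack_step (x : 'I_n -> 'rV[R]_m) (i : 'I_n) : 'rV[R]_m :=
  if i \in H then P i (x i + alpha *: \sum_(j in attack_kept i) (attack_msg x j i - x i))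
  else x i.

Definition attack_state (t : nat) : 'I_n -> 'rV[R]_m :=
  iter t attack_step (fun i => if i \in S then v else P i 0).

Lemma farthest_max x i j : i \in H -> j \in H ->
  enorm (x i - x j) <= enorm (x i - x (farthest x i)).
Proof.
by move=> iH jH; rewrite /farthest; case: Order.TotalTheory.arg_maxP => // k _; apply.
Qed.

Lemma attack_state_S t i : i \in S -> attack_state t i = v.
Proof.
elim: t i => [|t IH] i iS; first by rewrite /= iS.
rewrite /= /attack_step (SH i iS) IH // big1 ?scaler0 ?addr0.
  exact: is_proj_id (P_proj i v (SH i iS)) (X_v i iS).
move=> j; rewrite /attack_kept iS !inE => /orP[/andP[_ jS] | jF].
  by rewrite /attack_msg (SH j jS) IH ?subrr.
by rewrite /attack_msg (negbTE jF) iS subrr.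
Qed.

Lemma card_attack_kept i : i \in H -> #|attack_kept i| = (n - f - 1)%N.
Proof.
have card_H : #|H| = (n - f)%N by move: (cardsC H); rewrite card_ord card_F; lia.
rewrite /attack_kept => iH; case: ifP => iS; last first.
  by rewrite (cardsD1 i H) iH add1n in card_H; rewrite -card_H subn1.
have S_F : [disjoint S :\ i & ~: H].
  apply/pred0P => j /=; rewrite !inE.
  by case: (boolP (j \in S)) => [/SH -> | _]; rewrite ?andbF.
have := (leq_card_setU (S :\ i) (~: H)).2; rewrite S_F card_F => /eqP ->.
move: (cardsD1 i S); rewrite iS card_S add1n; lia.
Qed.

Lemma attack_msg_S t i j : i \in S -> j \in attack_kept i ->
  attack_msg (attack_state t) j i = v.
Proof.
rewrite /attack_kept /attack_msg => iS; rewrite iS !inE => /orP[/andP[_ jS] | jF].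
  by rewrite (SH j jS) attack_state_S.
by rewrite (negbTE jF).
Qed.

Lemma attack_kept_filter t i j k : i \in H ->
  j \in attack_kept i -> k != i -> k \notin attack_kept i ->
  enorm (attack_state t i - attack_msg (attack_state t) j i)
    <= enorm (attack_state t i - attack_msg (attack_state t) k i).
Proof.
move=> iH jM ki kM; case: (boolP (i \in S)) => iS.
  by rewrite attack_msg_S // attack_state_S // subrr enorm0 enorm_ge0.
move: jM kM; rewrite /attack_kept /attack_msg (negbTE iS) !inE ki /= => /andP[_ jH] kF.
by rewrite jH (negbTE kF); exact: farthest_max.
Qed.

Lemma attack_run_valid :
  valid_run f H X alpha attack_state (fun t => attack_msg (attack_state t))
    (fun=> attack_kept).
Proof.
split; [|split; [|split]].
- move=> i iH /=; case: ifP => iS; first exact: X_v.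
  by case: (P_proj i 0 iH).
- by move=> t i j jH; rewrite /attack_msg jH.
- move=> t i iH; split=> [|| j k]; [|exact: card_attack_kept | exact: attack_kept_filter].
  apply/subsetP => j jM; rewrite !inE; apply: contraTneq jM => ->.
  by rewrite /attack_kept; case: ifP; rewrite !inE eqxx ?iH.
- by move=> t i iH; rewrite /= /attack_step iH; exact: P_proj.
Qed.

End ByzantineAttack.

Theorem theorem1 (R : realType) (n m f : nat) (H : {set 'I_n})
    (X : 'I_n -> 'rV[R]_m -> Prop) (alpha : R) :
  (2 * f < n)%N ->
  #|~: H| = f ->
  (forall i, i \in H -> exists v, X i v) ->
  (forall i, i \in H -> eclosed (X i)) ->
  (forall i, i \in H -> convex (X i)) ->
  (exists v, forall i, i \in H -> X i v) ->
  0 < alpha ->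
  (forall (x : nat -> 'I_n -> 'rV[R]_m) (msg : nat -> 'I_n -> 'I_n -> 'rV[R]_m)
          (M : nat -> 'I_n -> {set 'I_n}),
      valid_run f H X alpha x msg M ->
      exists2 z, (forall i, i \in H -> X i z) &
                 forall i, i \in H -> converges_to (fun t => x t i) z) ->
  k_redundant H X (2 * f).
Proof.
(* The attack works for every step size, and the consensus hypothesis already
   yields a point of the intersection. *)
move=> lt_2f_n card_F X_nonempty X_closed X_convex _ _ consensus S SH card_S v.
split=> [v_S | v_H i iS]; last exact/v_H/(subsetP SH).
have [S' S'S card_S'] := exists_subset_card card_S.
have S'H : {subset S' <= H} by apply/subsetP/(subset_trans S'S SH).
have /choice[P P_proj] i : exists Pi, forall y, i \in H -> is_proj (X i) y (Pi y).
  case: (boolP (i \in H)) => [iH | _]; last by exists id.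
  have /choice[Pi Pi_proj] := proj_exists (X_nonempty i iH) (X_closed i iH) (X_convex i iH).
  by exists Pi.
have [s sS'] : exists s, s \in S'.
  by apply/card_gt0P; rewrite card_S' subn_gt0.
have X_v i : i \in S' -> X i v by move=> iS'; apply/v_S/(subsetP S'S).
have [z X_z cvg_z] := consensus _ _ _ (attack_run_valid alpha S'H card_S' card_F P_proj X_v).
have z_v := converges_to_cst (fun t => attack_state_S alpha S'H P_proj X_v t s sS')
  (cvg_z s (S'H s sS')).
by move=> i iH; rewrite -z_v; exact: X_z.
Qed.
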